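(* Let $\mathcal A\in\mathbb C^{n_1\times n_2\times n_3}$, $\mathcal A^-\in\mathcal A\{1\}$ and $\mathcal X\in\mathbb C^{n_2\times n_1\times n_3}$. The following are equivalent: (a) $\mathcal X=\mathcal A^-\mathcal A\mathcal A^*$; (b) $\mathcal X\mathcal A\mathcal A^\dagger=\mathcal X$ and $\mathcal X(\mathcal A^\dagger)^*=\mathcal A^-\mathcal A$; (c) $\mathcal X\mathcal A\mathcal A^\dagger=\mathcal X$ and $\mathcal X\mathcal A=\mathcal A^-\mathcal A\mathcal A^*\mathcal A$; (d) $\mathcal A^-\mathcal A\mathcal X\mathcal A\mathcal A^\dagger=\mathcal X$ and $\mathcal A\mathcal X(\mathcal A^\dagger)^*=\mathcal A$.
   Context: Fix a nonsingular matrix $M\in\mathbb C^{n_3\times n_3}$. For $\mathcal C\in\mathbb C^{n_1\times n_2\times n_3}$ let $\widehat{\mathcal C}=\mathcal C\times_3M$, i.e. $\widehat{\mathcal C}_{ijk}=\sum_{l=1}^{n_3}M_{kl}\mathcal C_{ijl}$, and let $\widehat{\mathcal C}^{(i)}$ denote its $i$-th frontal slice. The M-product $\mathcal C\star_M\mathcal D$ of $\mathcal C\in\mathbb C^{n_1\times n_2\times n_3}$ and $\mathcal D\in\mathbb C^{n_2\times l\times n_3}$ is the unique tensor with $\widehat{\mathcal C\star_M\mathcal D}^{(i)}=\widehat{\mathcal C}^{(i)}\widehat{\mathcal D}^{(i)}$ for all $i\in[n_3]$. Juxtaposition of tensors denotes the M-product. The conjugate transpose $\mathcal A^*$ is defined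 by $\widehat{\mathcal A^*}^{(i)}=(\widehat{\mathcal A}^{(i)})^*$. The Moore–Penrose inverse $\mathcal A^\dagger$ is the unique $\mathcal W$ satisfying $\mathcal A\mathcal W\mathcal A=\mathcal A$, $\mathcal W\mathcal A\mathcal W=\mathcal W$, $(\mathcal A\mathcal W)^*=\mathcal A\mathcal W$, $(\mathcal W\mathcal A)^*=\mathcal W\mathcal A$. $\mathcal A\{1\}$ is the set of all $\mathcal W$ with $\mathcal A\mathcal W\mathcal A=\mathcal A$. *)

From HB Require Import structures.
From mathcomp Require Import all_boot all_order all_algebra.
Set Implicit Arguments. Unset Strict Implicit. Unset Printing Implicit Defensive.
Import Order.TTheory GRing.Theory Num.Theory.
Local Open Scope ring_scope.

(* Scalars: an arbitrary numClosedFieldType C (algebraically closed field with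
   conjugation), which covers the complex numbers. *)

(* Third-order tensors n1 x n2 x n3, stored as their n3 frontal slices. *)
Definition tensor (C : numClosedFieldType) (n1 n2 n3 : nat) :=
  {ffun 'I_n3 -> 'M[C]_(n1, n2)}.

Definition ctrmx (C : numClosedFieldType) m n (A : 'M[C]_(m, n)) : 'M[C]_(n, m) :=
  (map_mx Num.conj A)^T.

Definition mode3 (C : numClosedFieldType) n1 n2 n3 (M : 'M[C]_n3)
  (T : tensor C n1 n2 n3) : tensor C n1 n2 n3 :=
  [ffun k => \sum_(l < n3) M k l *: T l].

(* The M-product: the unique tensor whose transformed slices are the products
   of the transformed slices (M nonsingular), i.e. (hat C * hat D) x_3 M^{-1}. *)
Definition mprod (C : numClosedFieldType) n1 n2 l n3 (M : 'M[C]_n3)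
  (A : tensor C n1 n2 n3) (B : tensor C n2 l n3) : tensor C n1 l n3 :=
  mode3 (invmx M) [ffun i => mode3 M A i *m mode3 M B i].

Definition mctr (C : numClosedFieldType) n1 n2 n3 (M : 'M[C]_n3)
  (A : tensor C n1 n2 n3) : tensor C n2 n1 n3 :=
  mode3 (invmx M) [ffun i => ctrmx (mode3 M A i)].

Definition is_mpinv (C : numClosedFieldType) n1 n2 n3 (M : 'M[C]_n3)
  (A : tensor C n1 n2 n3) (W : tensor C n2 n1 n3) : Prop :=
  [/\ mprod M (mprod M A W) A = A,
      mprod M (mprod M W A) W = W,
      mctr M (mprod M A W) = mprod M A W &
      mctr M (mprod M W A) = mprod M W A].

Definition is_inner_inv (C : numClosedFieldType) n1 n2 n3 (M : 'M[C]_n3)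
  (A : tensor C n1 n2 n3) (W : tensor C n2 n1 n3) : Prop :=
  mprod M (mprod M A W) A = A.

From mathcomp Require Import all_boot all_order all_algebra.
From Stdlib Require Import Setoid.
Set Implicit Arguments. Unset Strict Implicit. Unset Printing Implicit Defensive.
Import Order.TTheory GRing.Theory Num.Theory.
Local Open Scope ring_scope.

(* In the transform domain the M-product, the conjugate transpose and the
   generalized inverses all act slice by slice, so the equivalence reduces to
   the same statement for every frontal slice: matrices A, G with A G A = A and
   the Moore-Penrose inverse D of A. For matrices everything follows from
   A^* A D = A^*, D^* A^* = A D and A^* D^* = D A, which only use A D A = A and
   the hermitian projections A D, D A. *)

Lemma ctrmx_mul (C : numClosedFieldType) m n p (A : 'M[C]_(m, n)) (B : 'M[C]_(n, p)) :
  ctrmx (A *m B) = ctrmx B *m ctrmx A.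
Proof. by rewrite /ctrmx map_mxM trmx_mul. Qed.

Section MatrixCharacterization.

Variables (C : numClosedFieldType) (m n : nat).
Variables (A : 'M[C]_(m, n)) (G D X : 'M[C]_(n, m)).
Hypothesis AGA : A *m G *m A = A.
Hypothesis ADA : A *m D *m A = A.
Hypotheses (AD_herm : ctrmx (A *m D) = A *m D) (DA_herm : ctrmx (D *m A) = D *m A).

Let Ah := ctrmx A.

Lemma ctrmx_mpinv_ctrmx : ctrmx D *m Ah = A *m D.
Proof. by rewrite -ctrmx_mul AD_herm. Qed.

Lemma ctrmx_ctrmx_mpinv : Ah *m ctrmx D = D *m A.
Proof. by rewrite -ctrmx_mul DA_herm. Qed.

Lemma inner_idem : G *m A *m G *m A = G *m A.
Proof. by rewrite -mulmxA -(mulmxA G A) (mulmxA A G) AGA. Qed.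

Lemma mulmx_ctrmx_mpinvK k (Y : 'M[C]_(k, n)) : Y *m Ah *m A *m D = Y *m Ah.
Proof. by rewrite -!mulmxA -AD_herm -ctrmx_mul ADA. Qed.

Lemma char_a_b : X = G *m A *m Ah ->
  X *m A *m D = X /\ X *m ctrmx D = G *m A.
Proof.
move=> ->; split; first exact: mulmx_ctrmx_mpinvK.
by rewrite -mulmxA ctrmx_ctrmx_mpinv -mulmxA (mulmxA A D A) ADA.
Qed.

Lemma char_b_c : X *m A *m D = X /\ X *m ctrmx D = G *m A ->
  X *m A *m D = X /\ X *m A = G *m A *m Ah *m A.
Proof.
move=> [XAD XD]; split=> //.
by rewrite -XD -(mulmxA X) ctrmx_mpinv_ctrmx mulmxA XAD.
Qed.

Lemma char_c_d : X *m A *m D = X /\ X *m A = G *m A *m Ah *m A ->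
  G *m A *m X *m A *m D = X /\ A *m X *m ctrmx D = A.
Proof.
move=> [XAD XA].
have -> : X = G *m A *m Ah by rewrite -XAD XA mulmx_ctrmx_mpinvK.
split; first by rewrite !mulmxA inner_idem mulmx_ctrmx_mpinvK.
by rewrite !mulmxA AGA -mulmxA ctrmx_ctrmx_mpinv mulmxA ADA.
Qed.

Lemma char_d_a : G *m A *m X *m A *m D = X /\ A *m X *m ctrmx D = A ->
  X = G *m A *m Ah.
Proof.
move=> [GAXAD AXD].
have AXAD : A *m X *m A *m D = A *m Ah.
  by rewrite -(mulmxA _ A) -ctrmx_mpinv_ctrmx mulmxA AXD.
by rewrite -GAXAD -!mulmxA (mulmxA A X) (mulmxA (A *m X)) AXAD mulmxA.
Qed.

Lemma inner_mulmx_ctrmx_tfae :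
  [<-> X = G *m A *m Ah;
       X *m A *m D = X /\ X *m ctrmx D = G *m A;
       X *m A *m D = X /\ X *m A = G *m A *m Ah *m A;
       G *m A *m X *m A *m D = X /\ A *m X *m ctrmx D = A].
Proof. by tfae; [exact: char_a_b | exact: char_b_c | exact: char_c_d | exact: char_d_a]. Qed.

End MatrixCharacterization.

Section MProductSlices.

Variables (C : numClosedFieldType) (n3 : nat) (M : 'M[C]_n3).

Lemma mode3_mul n1 n2 (P Q : 'M[C]_n3) (T : tensor C n1 n2 n3) :
  mode3 P (mode3 Q T) = mode3 (P *m Q) T.
Proof.
apply/ffunP=> k; rewrite !ffunE.
under eq_bigr => l _ do rewrite ffunE scaler_sumr.
rewrite exchange_big /=; apply: eq_bigr => j _.
by rewrite mxE scaler_suml; apply: eq_bigr => l _; rewrite scalerA.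
Qed.

Lemma mode3_id n1 n2 (T : tensor C n1 n2 n3) : mode3 1%:M T = T.
Proof.
apply/ffunP=> k; rewrite ffunE (bigD1 k) //= big1 ?addr0.
  by rewrite mxE eqxx scale1r.
by move=> l /negPf lk; rewrite mxE eq_sym lk scale0r.
Qed.

Hypothesis M_unit : M \in unitmx.

Lemma mode3_invK n1 n2 (T : tensor C n1 n2 n3) : mode3 M (mode3 (invmx M) T) = T.
Proof. by rewrite mode3_mul mulmxV // mode3_id. Qed.

Lemma mode3K n1 n2 (T : tensor C n1 n2 n3) : mode3 (invmx M) (mode3 M T) = T.
Proof. by rewrite mode3_mul mulVmx // mode3_id. Qed.

Lemma mode3_mprod n1 n2 l (T : tensor C n1 n2 n3) (U : tensor C n2 l n3) i :
  mode3 M (mprod M T U) i = mode3 M T i *m mode3 M U i.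
Proof. by rewrite mode3_invK ffunE. Qed.

Lemma mode3_mctr n1 n2 (T : tensor C n1 n2 n3) i :
  mode3 M (mctr M T) i = ctrmx (mode3 M T i).
Proof. by rewrite mode3_invK ffunE. Qed.

Lemma tensor_slicesP n1 n2 (T U : tensor C n1 n2 n3) :
  T = U <-> forall i, mode3 M T i = mode3 M U i.
Proof.
split=> [-> //|eqTU]; rewrite -(mode3K T) -(mode3K U).
by congr mode3; apply/ffunP.
Qed.

Lemma inner_inv_slices n1 n2 (A : tensor C n1 n2 n3) (G : tensor C n2 n1 n3) :
  is_inner_inv M A G ->
  forall i, mode3 M A i *m mode3 M G i *m mode3 M A i = mode3 M A i.
Proof. by move=> AGA i; rewrite -!mode3_mprod AGA. Qed.

Lemma mpinv_slices n1 n2 (A : tensor C n1 n2 n3) (D : tensor C n2 n1 n3) :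
  is_mpinv M A D ->
  [/\ forall i, mode3 M A i *m mode3 M D i *m mode3 M A i = mode3 M A i,
      forall i, ctrmx (mode3 M A i *m mode3 M D i) = mode3 M A i *m mode3 M D i &
      forall i, ctrmx (mode3 M D i *m mode3 M A i) = mode3 M D i *m mode3 M A i].
Proof.
case=> ADA _ AD_herm DA_herm; split=> i.
- exact: (@inner_inv_slices _ _ A D ADA i).
- by rewrite -!mode3_mprod -mode3_mctr AD_herm.
- by rewrite -!mode3_mprod -mode3_mctr DA_herm.
Qed.

End MProductSlices.

Lemma forall_and (I : Type) (P Q : I -> Prop) :
  (forall i, P i /\ Q i) <-> (forall i, P i) /\ (forall i, Q i).
Proof. by split=> [PQ|[allP allQ] i]; [split=> i; case: (PQ i) | split]. Qed.

Lemma forall_iff_congr (I : Type) (P Q : I -> Prop) :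
  (forall i, P i <-> Q i) -> (forall i, P i) <-> (forall i, Q i).
Proof. by move=> PQ; split=> H i; apply/PQ. Qed.

Lemma and_iff_congr (P1 P2 Q1 Q2 : Prop) :
  P1 <-> Q1 -> P2 <-> Q2 -> P1 /\ P2 <-> Q1 /\ Q2.
Proof. by move=> [PQ1 QP1] [PQ2 QP2]; split=> [[/PQ1 ? /PQ2 ?] | [/QP1 ? /QP2 ?]]. Qed.

Lemma all_iff4_forall (I : Type) (P0 P1 P2 P3 : I -> Prop) :
  (forall i, [<-> P0 i; P1 i; P2 i; P3 i]) ->
  [<-> forall i, P0 i; forall i, P1 i; forall i, P2 i; forall i, P3 i].
Proof.
by move=> tfaeP; tfae=> Pj i;
  [apply: (tfaeP i 0 1).1 | apply: (tfaeP i 1 2).1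
  | apply: (tfaeP i 2 3).1 | apply: (tfaeP i 3 0).1].
Qed.

Lemma all_iff4_congr (P0 P1 P2 P3 Q0 Q1 Q2 Q3 : Prop) :
  P0 <-> Q0 -> P1 <-> Q1 -> P2 <-> Q2 -> P3 <-> Q3 ->
  [<-> Q0; Q1; Q2; Q3] -> [<-> P0; P1; P2; P3].
Proof.
move=> eq0 eq1 eq2 eq3 tfaeQ.
by tfae=> [/eq0/(tfaeQ 0 1)/eq1 | /eq1/(tfaeQ 1 2)/eq2
          | /eq2/(tfaeQ 2 3)/eq3 | /eq3/(tfaeQ 3 0)/eq0].
Qed.

Theorem theorem3p13 (C : numClosedFieldType) (n1 n2 n3 : nat) (M : 'M[C]_n3)
  (HM : M \in unitmx)
  (A : tensor C n1 n2 n3) (Am : tensor C n2 n1 n3) (Ad : tensor C n2 n1 n3)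
  (X : tensor C n2 n1 n3)
  (HAm : is_inner_inv M A Am) (HAd : is_mpinv M A Ad) :
  let Ast := mctr M A in
  [<-> (* (a) *) X = mprod M (mprod M Am A) Ast;
       (* (b) *) mprod M (mprod M X A) Ad = X /\
                 mprod M X (mctr M Ad) = mprod M Am A;
       (* (c) *) mprod M (mprod M X A) Ad = X /\
                 mprod M X A = mprod M (mprod M (mprod M Am A) Ast) A;
       (* (d) *) mprod M (mprod M (mprod M (mprod M Am A) X) A) Ad = X /\
                 mprod M (mprod M A X) (mctr M Ad) = A].
Proof.
move=> Ast; have [ADA AD_herm DA_herm] := mpinv_slices HM HAd.
apply: (all_iff4_congr _ _ _ _ (all_iff4_forall (fun i =>
  inner_mulmx_ctrmx_tfae (mode3 M X i) (inner_inv_slices HM HAm i)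
    (ADA i) (AD_herm i) (DA_herm i)))).
all: rewrite /Ast ?forall_and 2?(tensor_slicesP HM).
all: try apply: and_iff_congr.
all: by apply: forall_iff_congr => i; rewrite !(mode3_mprod HM) ?(mode3_mctr HM).
Qed.
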